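(* Let $F:\mathbb{R}^n\rightrightarrows\mathbb{R}^p$ and $G:\mathbb{R}^n\rightrightarrows\mathbb{R}^q$ be nearly convex set-valued mappings and $\Theta\subset\mathbb{R}^n$ a nearly convex set such that $\operatorname{ri}(\operatorname{dom} F)\cap\operatorname{ri}(\operatorname{dom} G)\cap\operatorname{ri}\Theta\neq\emptyset$. Then the set-valued mapping $\Psi:\mathbb{R}^n\times\mathbb{R}^n\times\mathbb{R}^q\rightrightarrows\mathbb{R}^p$ defined by $\Psi(x,u,y)=F(x+u)$ if $x\in\Theta$ and $y\in G(x)$, and $\Psi(x,u,y)=\emptyset$ otherwise, is nearly convex.
   Context: A set $\Omega\subset\mathbb{R}^k$ is nearly convex if there is a convex set $C$ with $C\subset\Omega\subset\overline{C}$. For an arbitrary set $\Omega$, $\operatorname{ri}\Omega=\{a\in\Omega:\exists\delta>0,\ B(a;\delta)\cap\operatorname{aff}\Omega\subset\Omega\}$. For a set-valued mapping $F$: $\operatorname{dom} F=\{x:F(x)\neq\emptyset\}$, $\operatorname{gph} F=\{(x,y):y\in F(x)\}$; $F$ is nearly convex if $\operatorname{gph} F$ is nearly convex. *)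

(* R^k is modelled as 'rV[R]_k over R : realType. *)
From mathcomp Require Import all_boot all_order all_algebra.
From mathcomp Require Import all_classical all_reals all_analysis.
Set Implicit Arguments. Unset Strict Implicit. Unset Printing Implicit Defensive.
Import Order.TTheory GRing.Theory Num.Theory.
Import numFieldNormedType.Exports.
Local Open Scope classical_set_scope.
Local Open Scope ring_scope.

Section Defs.
Variable R : realType.

Definition convex_set (V : lmodType R) (C : set V) : Prop :=
  forall x y, C x -> C y -> forall t : R, 0 <= t -> t <= 1 ->
    C (t *: x + (1 - t) *: y).

Definition nearly_convex (V : normedModType R) (Om : set V) : Prop :=
  exists C : set V, convex_set C /\ C `<=` Om /\ Om `<=` closure C.

Definition aff (V : lmodType R) (Om : set V) : set V :=
  [set x | exists (k : nat) (a : 'I_k -> V) (l : 'I_k -> R),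
     (forall i, Om (a i)) /\ \sum_(i < k) l i = 1 /\ x = \sum_(i < k) l i *: a i].

Definition ri (V : normedModType R) (Om : set V) : set V :=
  [set a | Om a /\ exists d : R, 0 < d /\ (ball a d `&` aff Om `<=` Om)].

(* set-valued mappings X ⇉ Y are functions X -> set Y *)
Definition dom (X Y : Type) (F : X -> set Y) : set X := [set x | F x !=set0].
Definition gph (X Y : Type) (F : X -> set Y) : set (X * Y) :=
  [set z | F z.1 z.2].

Definition nearly_convex_map (X Y : normedModType R) (F : X -> set Y) : Prop :=
  nearly_convex (gph F).

End Defs.

From Pilot Require Import Defs.
From HB Require Import structures.
From mathcomp Require Import all_boot all_order all_algebra.
From mathcomp Require Import all_classical all_reals all_analysis.
From mathcomp Require Import ring lra.
Import Order.TTheory GRing.Theory Num.Theory.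
Import numFieldNormedType.Exports.
Local Open Scope classical_set_scope.
Local Open Scope ring_scope.

(* We exhibit an explicit convex witness, the "relative-interior core"
     D = {(x, u, y, z) | x in ri Theta, (x, y) in ri gph G, (x + u, z) in ri gph F}.
   The key fact is the line segment principle: in finite dimension, the relative
   interior of a nearly convex set O absorbs half-open segments [a, b) with a in
   ri O and b in O.  Applied componentwise, D absorbs the segments from its
   points towards points of gph Psi; a nonempty set D inside O with this property
   is convex with O in cl D, so O is nearly convex.  The qualification condition
   makes D nonempty, through the fact that a point of ri (dom G) lifts to a point
   of ri (gph G). *)

Lemma split_lshift m n (j : 'I_m) : fintype.split (lshift n j) = inl j.
Proof. exact: (unsplitK (inl j)). Qed.

Lemma split_rshift m n (j : 'I_n) : fintype.split (rshift m j) = inr j.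
Proof. exact: (unsplitK (inr j)). Qed.

Section AffineHull.
Variables (R : realType) (V : lmodType R).

Lemma aff_sub (O : set V) x : O x -> aff O x.
Proof.
move=> Ox; exists 1%N, (fun _ => x), (fun _ => 1); split => //.
by rewrite !big_ord1 scale1r.
Qed.

Lemma aff_comb2 (O : set V) x y (l : R) :
  aff O x -> aff O y -> aff O (l *: x + (1 - l) *: y).
Proof.
move=> [k1 [a1 [w1 [Oa1 [s1 ->]]]]] [k2 [a2 [w2 [Oa2 [s2 ->]]]]].
exists (k1 + k2)%N,
  (fun i => match fintype.split i with inl j => a1 j | inr j => a2 j end),
  (fun i => match fintype.split i with
            | inl j => l * w1 j | inr j => (1 - l) * w2 j end).
split; first by move=> i; case: (fintype.split i).
rewrite !big_split_ord /=; split.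
  under eq_bigr do rewrite split_lshift.
  under [X in _ + X]eq_bigr do rewrite split_rshift.
  by rewrite -!mulr_sumr s1 s2 !mulr1 addrC subrK.
rewrite !scaler_sumr; congr (_ + _); apply: eq_bigr => i _.
  by rewrite split_lshift scalerA.
by rewrite split_rshift scalerA.
Qed.

Lemma aff_segment (O : set V) x y (t : R) :
  aff O x -> aff O y -> aff O ((1 - t) *: x + t *: y).
Proof.
by move=> Ax Ay; have := aff_comb2 _ _ _ (1 - t) Ax Ay; rewrite subKr.
Qed.

End AffineHull.

Arguments aff_sub {R V O x}.
Arguments aff_comb2 {R V O x y} l.
Arguments aff_segment {R V O x y} t.

Lemma closure_normP (R : realType) (V : normedModType R) (A : set V) x :
  closure A x <-> forall e, 0 < e -> exists a, A a /\ `|x - a| < e.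
Proof.
split.
  move=> cx e e0; have [a [Aa xa]] := cx (ball x e) (nbhsx_ballx x e e0).
  by exists a; split => //; move: xa; rewrite -ball_normE.
move=> H B /nbhs_ballP [e e0 eB]; have [a [Aa xa]] := H e e0.
by exists a; split => //; apply: eB; rewrite -ball_normE.
Qed.

Arguments closure_normP {R V A x}.

Section AbsorbingSets.
Variables (R : realType) (V : normedModType R).

Definition absorbs_segments (D O : set V) : Prop :=
  forall a b t, D a -> O b -> 0 <= t -> t < 1 -> D ((1 - t) *: a + t *: b).

Lemma absorbing_convex (D O : set V) :
  D `<=` O -> absorbs_segments D O -> Defs.convex_set D.
Proof.
move=> DO absD a b Da Db t t0 t1.
have [->|t_neq1] := eqVneq t 1; first by rewrite subrr scale0r addr0 scale1r.
rewrite addrC; apply: absD => //; first exact: DO.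
by rewrite lt_neqAle t_neq1.
Qed.

(* Every point of [O] is a limit of points of the segment from [d] to it. *)
Lemma absorbing_closure (D O : set V) d :
  absorbs_segments D O -> D d -> O `<=` closure D.
Proof.
move=> absD Dd s Os; apply/closure_normP => e e0.
pose tau := Num.min (e / (`|s - d| + 1)) (1 / 2).
have sd0 : 0 < `|s - d| + 1 by rewrite ltr_wpDl.
have tau0 : 0 < tau by rewrite lt_min; apply/andP; split; rewrite divr_gt0.
have tau_half : tau <= 1 / 2 by rewrite ge_min lexx orbT.
exists ((1 - (1 - tau)) *: d + (1 - tau) *: s); split.
  by apply: absD => //; lra.
have -> : s - ((1 - (1 - tau)) *: d + (1 - tau) *: s) = tau *: (s - d).
  by rewrite subKr scalerBl scale1r scalerBr opprD addrCA opprB [s + _]addrC subrK addrC.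
rewrite normrZ gtr0_norm //.
have : tau <= e / (`|s - d| + 1) by rewrite ge_min lexx.
rewrite ler_pdivlMr // => h; have := normr_ge0 (s - d); nra.
Qed.

Lemma nearly_convex_absorbing (D O : set V) :
  D `<=` O -> absorbs_segments D O -> D !=set0 -> nearly_convex O.
Proof.
move=> DO absD [d Dd]; exists D; split; first exact: absorbing_convex absD.
by split => //; exact: absorbing_closure absD Dd.
Qed.

End AbsorbingSets.

Arguments absorbs_segments {R V}.
Arguments nearly_convex_absorbing {R V D O}.

Section RelativeInterior.
Variables (R : realType) (V : normedModType R).

Definition aff_inner (O C : set V) (z : V) : Prop :=
  exists2 r, 0 < r & forall v, `|z - v| < r -> aff O v -> C v.

Lemma regroup_sub (z v c b : V) : z - (v - c) = (z + b - v) + (c - b).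
Proof. by rewrite [RHS]addrC [z + b]addrC addrA subrKA opprB addrA [c + z]addrC. Qed.

(* A point of ri O is interior to a segment [z, b] of O starting at any given
   point z of O: the segment from z through a can be prolonged inside O. *)
Lemma ri_prolong (O : set V) a z : ri O a -> O z ->
  exists b t, [/\ O b, 0 <= t, t < 1 & a = (1 - t) *: z + t *: b].
Proof.
move=> [Oa [del [del0 Hdel]]] Oz.
have az0 : 0 < `|a - z| + 1 by rewrite ltr_wpDl.
pose eps := del / (2 * (`|a - z| + 1)).
have eps0 : 0 < eps by rewrite divr_gt0 // mulr_gt0.
pose b := (1 + eps) *: a - eps *: z.
have ab : a - b = eps *: (z - a).
  by rewrite /b scalerDl scale1r scalerBr opprB addrC opprD addrA addrAC subrK.
have Ob : O b.
  apply: Hdel; split.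
    rewrite -ball_normE /= ab normrZ gtr0_norm // distrC.
    have : eps * (2 * (`|a - z| + 1)) = del by rewrite mulfVK // mulf_neq0 // gt_eqF.
    have := normr_ge0 (a - z); nra.
  have := aff_comb2 (1 + eps) (aff_sub Oa) (aff_sub Oz).
  by rewrite (_ : 1 - (1 + eps) = - eps) ?scaleNr //; ring.
have eps1 : 0 < 1 + eps by rewrite addr_gt0.
have t0 : 0 < (1 + eps)^-1 by rewrite invr_gt0.
exists b, (1 + eps)^-1; split => //; first exact: ltW.
  by rewrite invf_lt1 // ltrDl.
have e1 : (1 + eps)^-1 * (1 + eps) = 1 by rewrite mulVf // gt_eqF.
have e2 : 1 - (1 + eps)^-1 = (1 + eps)^-1 * eps by rewrite -{1}e1; ring.
by rewrite scalerBr !scalerA e1 scale1r e2 addrCA subrr addr0.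
Qed.

Section NearlyConvexWitness.
Variables (O C : set V).
Hypotheses (C_convex : Defs.convex_set C) (CO : C `<=` O) (OC : O `<=` closure C).

(* Inner points of C propagate along segments towards points of cl C: this
   is the classical "line segment principle" relative to aff O. *)
Lemma aff_inner_segment z b t : aff_inner O C z -> closure C b ->
  0 <= t -> t < 1 -> aff_inner O C ((1 - t) *: z + t *: b).
Proof.
move=> [r r0 zin] cb t0 t1.
have s0 : 0 < 1 - t by rewrite subr_gt0.
have rho0 : 0 < (1 - t) * r / 2 by rewrite divr_gt0 ?mulr_gt0.
exists ((1 - t) * r / 2) => // v wv Av.
have [c [Cc bc]] := closure_normP.1 cb _ rho0.
(* v = (1 - t) z' + t c, where z' lies in aff O and near z *)
pose z' := (1 - t)^-1 *: v + (1 - (1 - t)^-1) *: c.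
have sz' : (1 - t) *: z' = v - t *: c.
  rewrite /z' scalerDr !scalerA mulfV ?gt_eqF // scale1r mulrBr mulr1.
  rewrite mulfV ?gt_eqF //; congr (_ + _); rewrite -scaleNr; congr (_ *: _); ring.
have Cz' : C z'.
  apply: zin; last by apply: aff_comb2; [|apply/aff_sub/CO].
  have -> : z - z' = (1 - t)^-1 *: ((1 - t) *: z - (1 - t) *: z').
    by rewrite -scalerBr scalerA mulVf ?gt_eqF // scale1r.
  rewrite sz' normrZ gtr0_norm ?invr_gt0 // (regroup_sub _ _ _ (t *: b)).
  rewrite -scalerBr ltr_pdivrMl //; apply: (le_lt_trans (ler_normD _ _)).
  have : `|t *: (c - b)| <= `|b - c|.
    rewrite normrZ ger0_norm // distrC -[leRHS]mul1r.
    by apply: ler_wpM2r => //; apply: ltW.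
  have := normr_ge0 (b - c); lra.
have -> : v = (1 - t) *: z' + (1 - (1 - t)) *: c by rewrite sz' subKr subrK.
by apply: (C_convex _ _ Cz' Cc (1 - t)); [exact: ltW | lra].
Qed.

Lemma aff_inner_ri z : aff O z -> aff_inner O C z -> ri O z.
Proof.
move=> Az [r r0 zin]; split; first by apply: CO; apply: zin; rewrite ?subrr ?normr0.
by exists r; split => // v [zv Av]; apply: CO; apply: zin Av; move: zv; rewrite -ball_normE.
Qed.

Lemma ri_aff_inner z a : C z -> aff_inner O C z -> ri O a -> aff_inner O C a.
Proof.
move=> Cz zin ra; have [b [t [Ob t0 t1 ->]]] := ri_prolong _ _ _ ra (CO _ Cz).
exact: aff_inner_segment _ _ _ zin (OC _ Ob) t0 t1.
Qed.

Lemma ri_absorbs_of_inner z :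
  C z -> aff_inner O C z -> absorbs_segments (ri O) O.
Proof.
move=> Cz zin a b t ra Ob t0 t1; apply: aff_inner_ri.
  by apply: aff_segment; apply: aff_sub; [case: ra|].
exact: aff_inner_segment _ _ _ (ri_aff_inner _ _ Cz zin ra) (OC _ Ob) t0 t1.
Qed.

End NearlyConvexWitness.
End RelativeInterior.

Arguments aff_inner {R V}.
Arguments ri_prolong {R V O a z}.
Arguments aff_inner_ri {R V O C} _ {z}.
Arguments ri_absorbs_of_inner {R V O C} _ _ _ {z}.

Section ConvexCombinations.
Variables (R : realType) (V : lmodType R).

Lemma convex_comb (C : set V) k (c : 'I_k -> V) (l : 'I_k -> R) c0 :
  Defs.convex_set C -> C c0 -> (forall i, C (c i)) -> (forall i, 0 <= l i) ->
  \sum_i l i <= 1 -> C ((1 - \sum_i l i) *: c0 + \sum_i l i *: c i).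
Proof.
move=> C_convex Cc0; elim: k c l => [|k IH] c l Cc l0 s1.
  by rewrite !big_ord0 subr0 scale1r addr0.
rewrite !big_ord_recr /=; rewrite big_ord_recr /= in s1.
set L := \sum_(i < k) _ in s1 *; set S := \sum_(i < k) _; set ln := l ord_max in s1 *.
have L0 : 0 <= L by apply: sumr_ge0.
have ln0 : 0 <= ln by apply: l0.
have [ln1|ln1] := eqVneq ln 1.
  have L_eq0 : L = 0 by apply: le_anti; rewrite L0 andbT; move: s1; rewrite ln1; lra.
  have l_eq0 i : l (widen_ord (leqnSn k) i) = 0.
    by move/eqP: L_eq0; rewrite psumr_eq0 // => /allP H; apply/eqP/H; rewrite mem_index_enum.
  rewrite /S big1; last by move=> i _; rewrite l_eq0 scale0r.
  by rewrite L_eq0 ln1 add0r subrr scale0r !add0r scale1r; apply: Cc.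
have s0 : 0 < 1 - ln by rewrite subr_gt0 lt_neqAle ln1 /=; lra.
(* rescale the first k weights by 1 - ln and use induction *)
have -> : (1 - (L + ln)) *: c0 + (S + ln *: c ord_max) =
  (1 - ln) *: ((1 - L / (1 - ln)) *: c0 +
     \sum_(i < k) (l (widen_ord (leqnSn k) i) / (1 - ln)) *: c (widen_ord (leqnSn k) i))
  + (1 - (1 - ln)) *: c ord_max.
  rewrite scalerDr scaler_sumr !scalerA addrA; congr (_ + _ + _).
  - by congr (_ *: _); field; rewrite subr_eq0 eq_sym.
  - by apply: eq_bigr => i _; rewrite scalerA; congr (_ *: _); field; rewrite subr_eq0 eq_sym.
  - by congr (_ *: _); ring.
apply: C_convex; [|exact: Cc| exact: ltW|lra].
have := IH (fun i => c (widen_ord (leqnSn k) i))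
  (fun i => l (widen_ord (leqnSn k) i) / (1 - ln)).
rewrite -mulr_suml; apply => //.
- by move=> i; rewrite divr_ge0 // ltW.
- by rewrite ler_pdivrMr // mul1r -/L; lra.
Qed.

(* Weights within mu^2 of the barycentric weight mu = 1/(k+1) are admissible
   in [convex_comb]: a neighbourhood of the barycenter lies in C. *)
Lemma near_barycenter_mem (C : set V) k (c : 'I_k -> V) (l : 'I_k -> R) c0 :
  Defs.convex_set C -> C c0 -> (forall i, C (c i)) ->
  (forall i, `|k.+1%:R^-1 - l i| < k.+1%:R^-1 * k.+1%:R^-1) ->
  C ((1 - \sum_i l i) *: c0 + \sum_i l i *: c i).
Proof.
move=> C_convex Cc0 Cc near; set mu : R := k.+1%:R^-1 in near.
have mu0 : 0 < mu by rewrite invr_gt0 ltr0n.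
have muk : mu * (k%:R + 1) = 1 by rewrite /mu -natr1 mulVf // natr1 pnatr_eq0.
have mu1 : mu <= 1.
  have : 0 <= mu * k%:R by apply: mulr_ge0; [apply: ltW | apply: ler0n].
  by move: muk; rewrite mulrDr mulr1; lra.
apply: convex_comb => //.
  by move=> i; have := near i; rewrite ltr_norml; nra.
apply: (@le_trans _ _ (\sum_(i < k) (mu + mu * mu))).
  by apply: ler_sum => i _; have := near i; rewrite ltr_norml; lra.
rewrite sumr_const card_ord -mulr_natl.
have : 0 <= mu * mu by rewrite mulr_ge0 // ltW.
by move: muk; nra.
Qed.

End ConvexCombinations.

Section MatrixNorm.
Variable R : realType.

(* The matrix norm is the maximum of the absolute values of the entries. *)
Lemma entry_le_norm m n (M : 'M[R]_(m, n)) i j : `|M i j| <= `|M|.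
Proof.
rewrite [leRHS]/Num.Def.normr /= mx_normrE.
by apply/bigmax_geP; right => /=; exists (i, j).
Qed.

Lemma mulmx_bound a b (P : 'M[R]_(a, b)) :
  exists2 K, 0 <= K & forall u : 'rV[R]_a, `|u *m P| <= K * `|u|.
Proof.
have K0 : 0 <= \sum_l \sum_j `|P l j| by apply: sumr_ge0 => l _; apply: sumr_ge0.
exists (\sum_l \sum_j `|P l j|) => // u.
rewrite [leLHS]/Num.Def.normr /= mx_normrE; apply: bigmax_le => [|[i j] _] /=.
  exact: mulr_ge0.
rewrite mxE; apply: (le_trans (ler_norm_sum _ _ _)).
rewrite mulrC mulr_sumr; apply: ler_sum => l _.
rewrite normrM; apply: ler_pM => //; first exact: entry_le_norm.
by rewrite (bigD1 j) //= lerDl; apply: sumr_ge0.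
Qed.

End MatrixNorm.

Arguments entry_le_norm {R m n} M i j.
Arguments mulmx_bound {R a b} P.

Section FiniteDimensional.
Variables (R : realType) (V : normedModType R) (N : nat).
Variables (f : {linear V -> 'rV[R]_N}) (K : R).
Hypotheses (f_inj : injective f) (K_ge0 : 0 <= K)
  (f_bounded : forall x, `|f x| <= K * `|x|).

Lemma f_mulmx_bound {k} (P : 'M[R]_(N, k)) :
  exists2 M, 0 <= M & forall x, `|f x *m P| <= M * `|x|.
Proof.
have [M M0 HM] := mulmx_bound P; exists (M * K) => [|x]; first exact: mulr_ge0.
by rewrite -mulrA; apply: le_trans (HM _) _; apply: ler_wpM2l.
Qed.

(* A maximal family of points c i of C whose differences c i - c0 have
   linearly independent images under f; these images span f (C - c0). *)
Lemma maximal_frame (C : set V) c0 : exists k (B : 'M[R]_(k, N)) (c : 'I_k -> V),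
  [/\ row_free B, forall i, C (c i) /\ row i B = f (c i - c0)
    & forall x, C x -> (f (x - c0) <= B)%MS].
Proof.
pose frame k := `[< exists B : 'M[R]_(k, N), row_free B /\
   forall i, exists c, C c /\ row i B = f (c - c0) >].
have frame0 : frame 0%N.
  by apply/asboolP; exists 0; split; [rewrite /row_free mxrank0 | case].
have frame_le k : frame k -> (k <= N)%N.
  by move=> /asboolP [B [/eqP freeB _]]; rewrite -freeB; exact: rank_leq_col.
have [k /asboolP [B [freeB rowsB]] kmax] := ex_maxnP (ex_intro _ 0%N frame0) frame_le.
have [c hc] := choice rowsB.
exists k, B, c; split => // x Cx; apply/negPn/negP => nsub.
suff : frame (k + 1)%N by move/kmax; rewrite addn1 ltnn.
apply/asboolP; exists (col_mx B (f (x - c0))); split.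
  have rank_gt : (k < \rank (B + f (x - c0)%R)%MS)%N.
    rewrite -{1}(eqP freeB); apply: rank_ltmx; rewrite ltmxE addsmxSl /=.
    by apply: contra nsub => H; exact: (submx_trans (addsmxSr _ _) H).
  have rank_le : (\rank (col_mx B (f (x - c0)%R)) <= k + 1)%N by apply: rank_leq_row.
  by rewrite /row_free eqn_leq rank_le -addsmxE addn1 rank_gt.
move=> i; case: (split_ordP i) => j ->; first by rewrite rowKu; apply: rowsB.
rewrite rowKd; exists x; split => //.
by apply/matrixP => a b; rewrite !mxE (ord1 a) (ord1 j).
Qed.

Lemma closure_span {k} {B : 'M[R]_(k, N)} {C : set V} {c0} :
  (forall x, C x -> (f (x - c0) <= B)%MS) ->
  forall x, closure C x -> (f (x - c0) <= B)%MS.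
Proof.
move=> spanC x cx; rewrite submxE; apply/negPn/negP => nz.
set u := f (x - c0) *m cokermx B.
have u0 : 0 < `|u| by rewrite normr_gt0.
have [M M0 HM] := f_mulmx_bound (cokermx B).
have e0 : 0 < `|u| / (M + 1) by rewrite divr_gt0 // ltr_wpDl.
have [c [Cc xc]] := closure_normP.1 cx _ e0.
have ue : u = f (x - c) *m cokermx B.
  have cB : f (c - c0) *m cokermx B = 0 by apply/eqP; rewrite -submxE; apply: spanC.
  have xe : x - c0 = (x - c) + (c - c0) by rewrite addrA subrK.
  by rewrite /u xe linearD mulmxDl cB addr0.
have := HM (x - c); rewrite -ue.
move: xc; rewrite ltr_pdivlMr ?ltr_wpDl // => xc.
have := normr_ge0 (x - c); nra.
Qed.

Lemma aff_span k (B : 'M[R]_(k, N)) (O : set V) c0 :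
  (forall x, O x -> (f (x - c0) <= B)%MS) ->
  forall x, aff O x -> (f (x - c0) <= B)%MS.
Proof.
move=> spanO x [m [a [l [Oa [s1 ->]]]]].
have -> : \sum_i l i *: a i - c0 = \sum_i l i *: (a i - c0).
  by rewrite (eq_bigr _ (fun i _ => scalerBr _ _ _)) sumrB -scaler_suml s1 scale1r.
rewrite linear_sum; apply: summx_sub => i _; rewrite linearZ.
by apply: scalemx_sub; apply: spanO.
Qed.

(* Affine coordinates of x with respect to the frame (c0; c i). *)
Definition frame_coords {k} (B : 'M[R]_(k, N)) (c0 x : V) : 'rV[R]_k :=
  f (x - c0) *m pinvmx B.

Lemma frame_decomp {k} {B : 'M[R]_(k, N)} {c : 'I_k -> V} {c0 x} :
  (forall i, row i B = f (c i - c0)) -> (f (x - c0) <= B)%MS ->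
  x = (1 - \sum_i frame_coords B c0 x 0 i) *: c0
      + \sum_i frame_coords B c0 x 0 i *: c i.
Proof.
move=> rowsB /mulmxKpV; rewrite mulmx_sum_row => e.
set l := frame_coords B c0 x in e *.
have lin : \sum_i l 0 i *: (c i - c0) = x - c0.
  apply: f_inj; rewrite linear_sum -e; apply: eq_bigr => i _.
  by rewrite linearZ rowsB.
rewrite scalerBl scale1r scaler_suml addrAC -addrA -sumrB.
under eq_bigr do rewrite -scalerBr.
by rewrite lin addrC subrK.
Qed.

(* The barycenter of a maximal frame is an inner point of C relative to
   aff O: this is where finite dimensionality is used. *)
Lemma aff_inner_exists (O C : set V) :
  Defs.convex_set C -> C `<=` O -> O `<=` closure C -> O !=set0 ->
  exists2 z, C z & aff_inner O C z.
Proof.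
move=> C_convex CO OC [x0 Ox0].
have [c0 [Cc0 _]] := closure_normP.1 (OC _ Ox0) 1 ltr01.
have [k [B [c [freeB frameC spanC]]]] := maximal_frame C c0.
have spanO x : aff O x -> (f (x - c0) <= B)%MS.
  by apply: aff_span => y Oy; apply: closure_span spanC _ (OC _ Oy).
pose mu : R := k.+1%:R^-1.
have mu0 : 0 < mu by rewrite invr_gt0 ltr0n.
pose z := c0 + \sum_i mu *: (c i - c0).
have fz : f (z - c0) = const_mx mu *m B.
  rewrite /z addrAC subrr add0r linear_sum mulmx_sum_row; apply: eq_bigr => i _.
  by rewrite linearZ (frameC i).2 mxE.
have [M M0 HM] := f_mulmx_bound (pinvmx B).
pose r := mu * mu / (M + 1).
have r0 : 0 < r by rewrite divr_gt0 ?mulr_gt0 // ltr_wpDl.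
have coords_near v i : `|z - v| < r -> `|mu - frame_coords B c0 v 0 i| < mu * mu.
  move=> zv.
  have -> : mu - frame_coords B c0 v 0 i = (f (z - v) *m pinvmx B) 0 i.
    have -> : z - v = (z - c0) - (v - c0) by rewrite opprB addrA subrK.
    by rewrite linearB mulmxBl fz mulmxKp // !mxE.
  apply: le_lt_trans (entry_le_norm _ 0 i) _; apply: le_lt_trans (HM _) _.
  move: zv; rewrite /r ltr_pdivlMr ?ltr_wpDl // => zv.
  have : 0 < mu * mu by rewrite mulr_gt0.
  have := normr_ge0 (z - v); nra.
have inC v : `|z - v| < r -> (f (v - c0) <= B)%MS -> C v.
  move=> zv vB; rewrite (frame_decomp (fun i => (frameC i).2) vB).
  apply: near_barycenter_mem => // i; [exact: (frameC i).1 | exact: coords_near].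
exists z; first by apply: inC; [rewrite subrr normr0 | rewrite fz submxMl].
by exists r => // v zv Av; apply: inC zv (spanO v Av).
Qed.

End FiniteDimensional.

Arguments aff_inner_exists {R V N f K} _ _ _ {O C}.

Section RelativeInteriorFiniteDim.
Variable R : realType.

Definition finite_dim (V : normedModType R) : Prop :=
  exists N (f : {linear V -> 'rV[R]_N}), injective f /\
    exists2 K, 0 <= K & forall x, `|f x| <= K * `|x|.

Lemma finite_dim_row n : finite_dim 'rV[R]_n.
Proof. by exists n, idfun; split => //; exists 1 => // x; rewrite mul1r. Qed.

Definition pair_row n m (x : 'rV[R]_n * 'rV[R]_m) : 'rV[R]_(n + m) :=
  row_mx x.1 x.2.

Lemma pair_row_linear n m : linear (@pair_row n m).
Proof. by move=> a x y; rewrite /pair_row /= scale_row_mx add_row_mx. Qed.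

HB.instance Definition _ n m :=
  GRing.isLinear.Build R _ _ _ (@pair_row n m) (@pair_row_linear n m).

Lemma finite_dim_prod n m : finite_dim ('rV[R]_n * 'rV[R]_m)%type.
Proof.
exists (n + m)%N, (@pair_row n m); split.
  by move=> [x1 y1] [x2 y2] /eq_row_mx [/= -> ->].
exists 1 => // -[x y]; rewrite mul1r [leLHS]/Num.Def.normr /= mx_normrE.
apply: bigmax_le => [|[i j] _] //=; rewrite /pair_row mxE.
case: splitP => j' _; apply: le_trans (entry_le_norm _ i j') _.
  by rewrite prod_normE /= le_max lexx.
by rewrite prod_normE /= le_max lexx orbT.
Qed.

Variable V : normedModType R.
Hypothesis V_fd : finite_dim V.

Lemma ri_absorbs (O : set V) : nearly_convex O -> absorbs_segments (ri O) O.
Proof.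
move=> [C [C_convex [CO OC]]] a b t ra; have [N [f [f_inj [K K0 fK]]]] := V_fd.
have [z Cz zin] := aff_inner_exists f_inj K0 fK C_convex CO OC (ex_intro _ a ra.1).
exact: (ri_absorbs_of_inner C_convex CO OC Cz zin).
Qed.

Lemma ri_nonempty (O : set V) : nearly_convex O -> O !=set0 -> ri O !=set0.
Proof.
move=> [C [C_convex [CO OC]]] O0; have [N [f [f_inj [K K0 fK]]]] := V_fd.
have [z Cz zin] := aff_inner_exists f_inj K0 fK C_convex CO OC O0.
by exists z; apply: (aff_inner_ri CO) zin; apply/aff_sub/CO.
Qed.

End RelativeInteriorFiniteDim.

Arguments ri_absorbs {R V} _ {O}.
Arguments ri_nonempty {R V} _ {O}.

(* A point of ri (dom G) is the first component of a point of ri (gph G):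
   prolong a segment from the projection of some point of ri (gph G). *)
Lemma ri_dom_lift {R : realType} {n m} {G : 'rV[R]_n -> set 'rV[R]_m} {x0} :
  nearly_convex_map G -> ri (dom G) x0 -> exists y0, ri (gph G) (x0, y0).
Proof.
move=> ncG rx0; have [y Gy] := rx0.1.
have [[x1 y1] r1] := ri_nonempty (finite_dim_prod R n m) ncG (ex_intro _ (x0, y) Gy).
have [x2 [t [[y2 Gy2] t0 t1 ->]]] := ri_prolong rx0 (ex_intro _ y1 r1.1 : dom G x1).
exists ((1 - t) *: y1 + t *: y2).
exact: (ri_absorbs (finite_dim_prod R n m) ncG (x1, y1) (x2, y2) t r1 Gy2 t0 t1).
Qed.

Section Theorem45.
Variables (R : realType) (n p q : nat).
Variables (F : 'rV[R]_n -> set 'rV[R]_p) (G : 'rV[R]_n -> set 'rV[R]_q).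
Variable Theta : set 'rV[R]_n.

Definition Psi (xuy : 'rV[R]_n * 'rV[R]_n * 'rV[R]_q) : set 'rV[R]_p :=
  if `[< Theta xuy.1.1 /\ G xuy.1.1 xuy.2 >] then F (xuy.1.1 + xuy.1.2) else set0.

Lemma gph_PsiP x u y z :
  gph Psi (x, u, y, z) <-> [/\ Theta x, G x y & F (x + u) z].
Proof.
rewrite /gph /Psi /=; case: asboolP => [[Tx Gxy]|nTG]; first by split => [|[]].
by split => [|[Tx Gxy _]] //; exfalso; exact: nTG.
Qed.

Definition Psi_core : set ('rV[R]_n * 'rV[R]_n * 'rV[R]_q * 'rV[R]_p) :=
  [set s | [/\ ri Theta s.1.1.1, ri (gph G) (s.1.1.1, s.1.2)
            & ri (gph F) (s.1.1.1 + s.1.1.2, s.2)]].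

Lemma Psi_core_sub : Psi_core `<=` gph Psi.
Proof. by move=> [[[x u] y] z] [/= [Tx _] [Gxy _] [Fz _]]; apply/gph_PsiP. Qed.

Hypotheses (ncF : nearly_convex_map F) (ncG : nearly_convex_map G)
  (ncT : nearly_convex Theta).

Lemma Psi_core_absorbs : absorbs_segments Psi_core (gph Psi).
Proof.
move=> [[[x1 u1] y1] z1] [[[x u] y] z] t [/= rT1 rG1 rF1] /gph_PsiP [Tx Gxy Fz] t0 t1.
rewrite -[_ + t *: _]/((1 - t) *: x1 + t *: x, (1 - t) *: u1 + t *: u,
                       (1 - t) *: y1 + t *: y, (1 - t) *: z1 + t *: z).
split; cbn [fst snd].
- exact: (ri_absorbs (finite_dim_row R n) ncT x1 x t rT1 Tx t0 t1).
- exact: (ri_absorbs (finite_dim_prod R n q) ncG (x1, y1) (x, y) t rG1 Gxy t0 t1).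
- have -> : (1 - t) *: x1 + t *: x + ((1 - t) *: u1 + t *: u)
           = (1 - t) *: (x1 + u1) + t *: (x + u) by rewrite !scalerDr addrACA.
  exact: (ri_absorbs (finite_dim_prod R n p) ncF (x1 + u1, z1) (x + u, z) t rF1 Fz t0 t1).
Qed.

Lemma Psi_core_nonempty :
  ri (dom F) `&` ri (dom G) `&` ri Theta !=set0 -> Psi_core !=set0.
Proof.
move=> [x0 [[rF rG] rT]].
have [z0 rFz0] := ri_dom_lift ncF rF; have [y0 rGy0] := ri_dom_lift ncG rG.
by exists (x0, 0, y0, z0); split; cbn [fst snd]; rewrite ?addr0.
Qed.

End Theorem45.

Theorem theorem4p5 (R : realType) (n p q : nat)
  (F : 'rV[R]_n -> set 'rV[R]_p) (G : 'rV[R]_n -> set 'rV[R]_q)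
  (Theta : set 'rV[R]_n) :
  nearly_convex_map F -> nearly_convex_map G -> nearly_convex Theta ->
  ri (dom F) `&` ri (dom G) `&` ri Theta !=set0 ->
  nearly_convex_map
    (fun xuy : 'rV[R]_n * 'rV[R]_n * 'rV[R]_q =>
       if `[< Theta xuy.1.1 /\ G xuy.1.1 xuy.2 >]
       then F (xuy.1.1 + xuy.1.2) else set0).
Proof.
move=> ncF ncG ncT qualification.
apply: (nearly_convex_absorbing (@Psi_core_sub R n p q F G Theta)).
- exact: Psi_core_absorbs.
- exact: Psi_core_nonempty.
Qed.
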